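(* Let $M,N$ be sharp, integral monoids, $\Gamma$ an $M$-metrised graph, $f:M\to N$ a monoid homomorphism with edge contraction $\Gamma'$ of $\Gamma$ along $f$, and $D\in\operatorname{Div}(\Gamma)$. Then $r(f_*(D))\ge r(D)$ (rank in $\Gamma'$ versus rank in $\Gamma$).
   Context: Monoids are commutative, sharp (only unit $0$), integral (cancellative), with groupification; $\langle m\rangle=\{km:k\in\mathbb Z\}$ and for $x=km$, $m\ne0$, $x/m:=k$. A graph is $(X,r,i)$, $X$ finite, $r$ idempotent, $i$ an involution, $i(x)=x\iff r(x)=x$; vertices $V$ = fixed points, half-edges $H=X\setminus V$, edges $\{e,i(e)\}$ joining $r(e),r(i(e))$, $H_v=\{e\in H:r(e)=v\}$; graphs are connected. An $M$-metrised graph adds $l:X\to M$ with $l(i(x))=l(x)$, $l(x)=0\iff x\in V$. Divisors: free abelian group on $V$, pointwise order; $\operatorname{Div}^k_+$ = effective divisors of degree $k$. $\operatorname{PL}(\Gamma)=\{g:V\to M^{gp}: g(r(e))-g(r(i(e)))\in\langle l(e)\rangle\ \forall e\in H\}$; $\Delta(g)=\sum_{v}\big(\sum_{e\in H_v}\frac{g(v)-g(r(i(e)))}{l(e)}\big)[v]$; $D\sim D'$ iff $D-D'\in\Delta(\operatorname{PL}(\Gamma))$; $|D|=\{E\ge0:E\sim D\}$; $r(D)=\max\{k\in\mathbb Z:|D-F|\ne\emptyset\ \forall F\in\operatorname{Div}^k_+(\Gamma)\}$. The edge contraction of $\Gamma$ along $f$ is the $N$-metrised graph $\Gamma'$ obtained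 as the quotient of $X$ by the equivalence relation generated by $e\sim r(e)\sim i(e)\sim r(i(e))$ for every $e\in H$ with $f(l(e))=0$, with induced $r,i$ and length $f\circ l$; $\varphi$ is the quotient map and $f_*(D)=\sum_{v}D(v)[\varphi(v)]$. *)

From HB Require Import structures.
From mathcomp Require Import all_boot all_order all_algebra.
Set Implicit Arguments. Unset Strict Implicit. Unset Printing Implicit Defensive.
Import Order.TTheory GRing.Theory Num.Theory.
Local Open Scope ring_scope.

(** Monoids.  A commutative integral (cancellative) monoid is represented as
    a submonoid [M] of an abelian group [G]; its groupification [M^gp] is the
    subgroup {a - b : a, b in M}. *)
Definition monoid_closed (G : zmodType) (M : pred G) :=
  0 \in M /\ (forall a b, a \in M -> b \in M -> a + b \in M).
Definition sharp (G : zmodType) (M : pred G) :=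
  forall a, a \in M -> - a \in M -> a = 0.
Definition sharp_int_monoid (G : zmodType) (M : pred G) :=
  monoid_closed M /\ sharp M.
Definition in_gp (G : zmodType) (M : pred G) (x : G) :=
  exists a b, [/\ a \in M, b \in M & x = a - b].
(** A monoid homomorphism M -> N (only its values on M matter). *)
Definition monoid_hom (G G' : zmodType) (M : pred G) (N : pred G') (f : G -> G') :=
  [/\ f 0 = 0, (forall a b, a \in M -> b \in M -> f (a + b) = f a + f b)
   & (forall a, a \in M -> f a \in N)].

Section Graph.
Variables (X : finType) (r i : X -> X).

Definition vertex (x : X) : bool := r x == x.

Definition is_graph :=
  [/\ (forall x, r (r x) = r x), (forall x, i (i x) = x)
    & (forall x, i x = x <-> r x = x)].

Definition adj : rel X :=
  fun x y => [exists e, [&& ~~ vertex e, r e == x & r (i e) == y]].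
Definition connected := forall v w, vertex v -> vertex w -> connect adj v w.

Variables (G : zmodType) (M : pred G) (l : X -> G).

Definition metrised :=
  forall x, [/\ l (i x) = l x, l x \in M & (l x = 0 <-> vertex x)].

(** Divisors: integer functions; only their values on vertices matter. *)
Definition divisor := X -> int.
Definition deg (D : divisor) : int := \sum_(v | vertex v) D v.
Definition effective (D : divisor) := forall v, vertex v -> 0 <= D v.

Definition PL (g : X -> G) :=
  (forall v, vertex v -> in_gp M (g v)) /\
  (forall e, ~~ vertex e -> exists k : int, g (r e) - g (r (i e)) = l e *~ k).

(** Delta(g) = D : the slope s e is (g(r e) - g(r (i e))) / l(e), i.e. the
    integer k with g(r e) - g(r (i e)) = k * l(e) (unique since l e <> 0 has
    infinite order in M^gp for sharp integral M). *)
Definition laplacian_is (g : X -> G) (D : divisor) :=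
  exists s : X -> int,
    (forall e, ~~ vertex e -> g (r e) - g (r (i e)) = l e *~ s e) /\
    (forall v, vertex v -> D v = \sum_(e | ~~ vertex e && (r e == v)) s e).

Definition principal (D : divisor) := exists g, PL g /\ laplacian_is g D.
Definition lin_equiv (D D' : divisor) := principal (fun x => D x - D' x).
Definition linsys_nonempty (D : divisor) :=
  exists E : divisor, effective E /\ lin_equiv E D.
Definition rank_cond (D : divisor) (k : int) :=
  forall F : divisor, effective F -> deg F = k ->
    linsys_nonempty (fun x => D x - F x).
Definition is_rank (D : divisor) (k : int) :=
  rank_cond D k /\ (forall k', rank_cond D k' -> k' <= k).
End Graph.

Section Contraction.
Variables (X : finType) (r i : X -> X) (G G' : zmodType) (l : X -> G) (f : G -> G').

Definition quad (e : X) : seq X := [:: e; r e; i e; r (i e)].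
(** generators of the equivalence relation: e ~ r e ~ i e ~ r (i e)
    for half-edges e with f (l e) = 0 *)
Definition cgen : rel X :=
  fun x y => [exists e, [&& ~~ vertex r e, f (l e) == 0, x \in quad e & y \in quad e]].

Lemma cgen_sym : symmetric cgen.
Proof.
move=> x y; apply/existsP/existsP => -[e /and4P [h1 h2 h3 h4]];
  by exists e; rewrite h1 h2 h3 h4.
Qed.

(** the quotient set X' : representatives of the classes of connect cgen *)
Definition cX := {x : X | fingraph.root cgen x == x}.

Lemma root_is_root (x : X) : fingraph.root cgen (fingraph.root cgen x) == fingraph.root cgen x.
Proof. by apply/eqP; apply: fingraph.root_root; apply: sym_connect_sym; exact: cgen_sym. Qed.

Definition phi (x : X) : cX := exist _ (fingraph.root cgen x) (root_is_root x).
Definition cr (y : cX) : cX := phi (r (val y)).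
Definition ci (y : cX) : cX := phi (i (val y)).
Definition cl (y : cX) : G' := f (l (val y)).

Definition pushforward (D : divisor X) : divisor cX :=
  fun y => \sum_(v | vertex r v && (phi v == y)) D v.
End Contraction.
Arguments phi {X} r i {G G'} l f x.
Arguments cr {X} r i {G G'} l f y.
Arguments ci {X} r i {G G'} l f y.
Arguments cl {X} r i {G G'} l f y.
Arguments pushforward {X} r i {G G'} l f D y.

From Pilot Require Import Defs.
From mathcomp Require Import all_boot all_order all_algebra.
From Stdlib Require Import ClassicalEpsilon.
Set Implicit Arguments. Unset Strict Implicit. Unset Printing Implicit Defensive.
Import Order.TTheory GRing.Theory Num.Theory.
Local Open Scope ring_scope.

(** Ranks can only grow under contraction because linear equivalence is pushed
    forward.  If [g] is a piecewise linear function on Γ with slopes [s], then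
    [f ∘ g] (extended to [M^gp]) is constant on each contracted class, since a
    contracted edge has [f (l e) = 0]; it is therefore a piecewise linear function on Γ'
    with the same slopes on the surviving edges, and its Laplacian is [f_*] of the
    Laplacian of [g], because the slopes of a contracted edge cancel in pairs
    ([s (i e) = - s e]).  Finally every effective [F'] on Γ' of degree [k] is
    [f_* F] for an effective [F] of degree [k] on Γ, so [|D - F| <> ∅] gives
    [|f_* D - F'| <> ∅]. *)

Lemma sum_odd_involution (T : finType) (R : numDomainType) (j : T -> T)
    (P : pred T) (F : T -> R) :
  involutive j -> (forall x, P (j x) = P x) -> (forall x, P x -> F (j x) = - F x) ->
  \sum_(x | P x) F x = 0.
Proof.
move=> jK Pj Fj; set S := LHS.
have SN : S = - S.
  rewrite {1}/S (reindex_inj (inv_inj jK)) /= -sumrN.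
  by apply: eq_big => x; rewrite Pj // => /Fj.
have : S *+ 2 = 0 by rewrite mulr2n {2}SN subrr.
by move/eqP; rewrite mulrn_eq0 => /orP [//|/eqP].
Qed.

Section MonoidLemmas.
Variables (G : zmodType) (M : pred G).
Hypothesis closedM : Defs.monoid_closed M.

Lemma mulrn_closed m n : m \in M -> m *+ n \in M.
Proof.
case: closedM => M0 MD Mm; elim: n => [|n IHn]; first by rewrite mulr0n.
by rewrite mulrS MD.
Qed.

Lemma sharp_mulrz_eq0 m k : sharp M -> m \in M -> m != 0 -> m *~ k = 0 -> k = 0.
Proof.
move=> sharpM Mm m_neq0.
have mulrSn_neq0 n : m *+ n.+1 != 0.
  rewrite mulrS addr_eq0; apply: contra m_neq0 => /eqP mE; apply/eqP/sharpM => //.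
  by rewrite mE opprK mulrn_closed.
case: k => [[|n]|n] //= => [/eqP|]; first by rewrite (negbTE (mulrSn_neq0 n)).
by rewrite NegzE mulrNz => /eqP; rewrite oppr_eq0 (negbTE (mulrSn_neq0 n)).
Qed.

Variables (G' : zmodType) (N : pred G') (f : G -> G').
Hypothesis homf : monoid_hom M N f.

Lemma hom_mulrn m n : m \in M -> f (m *+ n) = f m *+ n.
Proof.
case: homf => f0 fD _ Mm; elim: n => [|n IHn]; first by rewrite !mulr0n.
by rewrite !mulrS fD ?IHn ?mulrn_closed.
Qed.

Lemma hom_subr_eq a b c d : a \in M -> b \in M -> c \in M -> d \in M ->
  a - b = c - d -> f a - f b = f c - f d.
Proof.
case: homf => _ fD _ Ma Mb Mc Md abcd.
have /(congr1 f) : a + d = c + b by rewrite -(subrK b a) abcd addrAC subrK.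
by rewrite !fD // => fE; apply/eqP; rewrite subr_eq addrAC eq_sym subr_eq fE.
Qed.

(** The extension of [f] to [M^gp]: [x = a - b] with [a, b] in [M] goes to
    [f a - f b], independently of the chosen pair by [hom_subr_eq]; the value
    off [M^gp] is unspecified. *)
Definition gp_ext (x : G) : G' :=
  let p := epsilon (inhabits (0, 0))
             (fun p => [/\ p.1 \in M, p.2 \in M & x = p.1 - p.2]) in
  f p.1 - f p.2.

Lemma gp_extE x a b : a \in M -> b \in M -> x = a - b -> gp_ext x = f a - f b.
Proof.
move=> Ma Mb xE; rewrite /gp_ext.
case: (epsilon_spec (inhabits (0, 0))
  (fun p => [/\ p.1 \in M, p.2 \in M & x = p.1 - p.2])); first by exists (a, b).
by move=> Mp1 Mp2 xE'; apply: hom_subr_eq; rewrite // -xE'.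
Qed.

Lemma gp_extB x y : in_gp M x -> in_gp M y -> gp_ext (x - y) = gp_ext x - gp_ext y.
Proof.
case: closedM homf => _ MD [_ fD _] [a [b [Ma Mb ->]]] [c [d [Mc Md ->]]].
rewrite (gp_extE Ma Mb erefl) (gp_extE Mc Md erefl) (@gp_extE _ (a + d) (b + c)) ?MD //.
  by rewrite !fD // opprD opprB addrACA addrC.
by rewrite opprB opprD addrACA.
Qed.

Lemma gp_ext_mulrz m k : m \in M -> gp_ext (m *~ k) = f m *~ k.
Proof.
case: closedM homf => M0 _ [f0 _ _] Mm; case: k => n.
  by rewrite (@gp_extE _ (m *+ n) 0) ?mulrn_closed ?subr0 ?f0 ?subr0 ?hom_mulrn.
rewrite NegzE !mulrNz (@gp_extE _ 0 (m *+ n.+1)) ?mulrn_closed ?sub0r //.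
by rewrite f0 sub0r hom_mulrn.
Qed.

Lemma gp_ext_in_gp x : in_gp M x -> in_gp N (gp_ext x).
Proof.
case: homf => _ _ fN [a [b [Ma Mb xE]]].
by exists (f a), (f b); rewrite (gp_extE Ma Mb xE) !fN.
Qed.

End MonoidLemmas.

Lemma principal_eq_vertex (X : finType) (r i : X -> X) (G : zmodType) (M : pred G)
    (l : X -> G) (D D' : divisor X) :
  (forall v, vertex r v -> D v = D' v) -> principal r i M l D -> principal r i M l D'.
Proof.
move=> DD' [g [PLg [s [slope_s lap_s]]]]; exists g; split=> //.
by exists s; split=> // v Vv; rewrite -DD' ?lap_s.
Qed.

Section Contraction.
Variables (G G' : zmodType) (M : pred G) (N : pred G') (f : G -> G').
Variables (X : finType) (r i : X -> X) (l : X -> G).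
Hypotheses (sharpM : sharp_int_monoid M) (homf : monoid_hom M N f).
Hypotheses (graphX : is_graph r i) (metrl : metrised r i M l).

Local Notation V := (vertex r).
Local Notation cg := (cgen r i l f).
Local Notation ph := (phi r i l f).
Local Notation X' := (cX r i l f).
Local Notation CR := (cr r i l f).
Local Notation CI := (ci r i l f).
Local Notation CL := (cl r i l f).
Local Notation CV := (vertex CR).
Local Notation pf := (pushforward r i l f).

Lemma r_idem x : r (r x) = r x. Proof. by case: graphX. Qed.
Lemma iK : involutive i. Proof. by case: graphX. Qed.
Lemma vertex_r x : V (r x). Proof. by rewrite /vertex r_idem. Qed.
Lemma l_i x : l (i x) = l x. Proof. by case: (metrl x). Qed.

Lemma vertex_i x : V (i x) = V x.
Proof.
case: graphX => _ _ fixE; rewrite /vertex.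
apply/eqP/eqP => [/fixE|/fixE ix_x]; last by apply/fixE; rewrite ix_x.
by rewrite iK => x_ix; apply/fixE; rewrite -{1}x_ix.
Qed.

Lemma cgen_connect_sym : connect_sym cg.
Proof. exact/sym_connect_sym/cgen_sym. Qed.

Lemma phi_val y : ph (val y) = y.
Proof. by apply: val_inj => /=; apply/eqP; case: y. Qed.

Lemma phi_connect x y : connect cg x y -> ph x = ph y.
Proof. by move/(fingraph.rootP cgen_connect_sym) => xy; apply: val_inj. Qed.

Lemma connect_phi x : connect cg x (val (ph x)).
Proof. exact: connect_root. Qed.

Lemma phi_quad e x y : ~~ V e -> f (l e) = 0 ->
  x \in quad r i e -> y \in quad r i e -> ph x = ph y.
Proof.
move=> Ve fle0 xe ye; apply/phi_connect/connect1/existsP; exists e.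
by rewrite Ve fle0 eqxx xe ye.
Qed.

Lemma cgen_uncontracted e x : ~~ V e -> f (l e) != 0 -> cg e x = false.
Proof.
move=> Ve fle_neq0; apply/negbTE/existsP => -[e' /and4P [Ve' /eqP fle'0 ee' _]].
move: ee'; rewrite !inE => /or4P [] /eqP eE.
- by rewrite eE fle'0 eqxx in fle_neq0.
- by rewrite eE vertex_r in Ve.
- by rewrite eE l_i fle'0 eqxx in fle_neq0.
- by rewrite eE vertex_r in Ve.
Qed.

Lemma connect_uncontracted e x : ~~ V e -> f (l e) != 0 -> connect cg e x -> x = e.
Proof. by move=> Ve fle /connectP [[|x' p] //= /andP [] ]; rewrite cgen_uncontracted. Qed.

Lemma val_phi_uncontracted e : ~~ V e -> f (l e) != 0 -> val (ph e) = e.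
Proof. by move=> Ve fle; apply: connect_uncontracted (connect_phi e). Qed.

(** A class of the contraction is a vertex exactly when its representative is a
    vertex or a contracted half-edge: an uncontracted half-edge is a class of its own. *)
Lemma cvertexE y : CV y = V (val y) || (f (l (val y)) == 0).
Proof.
rewrite /vertex /cr; set e := val y.
have [/eqP re|Ve] /= := boolP (r e == e); first by rewrite re phi_val eqxx.
have [fle0|fle] /= := eqVneq (f (l e)) 0.
  by rewrite (@phi_quad e (r e) e) ?phi_val ?inE ?eqxx ?orbT.
apply/negbTE/eqP => phre.
have := connect_phi (r e); rewrite phre -/e cgen_connect_sym.
by move/(connect_uncontracted Ve fle) => re; rewrite re eqxx in Ve.
Qed.

Lemma sum_uncontracted (R : zmodType) (F : X -> R) y :
  \sum_(e | ~~ V e && (ph (r e) == y) && (f (l e) != 0)) F e =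
  \sum_(y' | ~~ CV y' && (CR y' == y)) F (val y').
Proof.
rewrite (reindex (fun y' : X' => val y')); last first.
  exists ph => [y' _ | e /andP [/andP [Ve _] fle]]; first exact: phi_val.
  exact: val_phi_uncontracted.
by apply: eq_bigl => y'; rewrite cvertexE negb_or /cr andbAC.
Qed.

Definition lift_divisor (F' : divisor X') : divisor X :=
  fun v => if v == r (val (ph v)) then F' (ph v) else 0.

Lemma cvertex_phi v : v = r (val (ph v)) -> CV (ph v).
Proof. by move=> vE; rewrite /vertex /cr -vE eqxx. Qed.

Lemma lift_effective F' : effective CR F' -> effective r (lift_divisor F').
Proof. by move=> F'ge0 v _; rewrite /lift_divisor; case: eqP => // /cvertex_phi/F'ge0. Qed.

Lemma deg_lift F' : deg r (lift_divisor F') = deg CR F'.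
Proof.
rewrite /deg [RHS](reindex_onto ph (fun y => r (val y))) => [|y /eqP //].
rewrite big_mkcond [RHS]big_mkcond; apply: eq_bigr => v _.
rewrite /lift_divisor [r _ == v]eq_sym.
case: eqP => [vE|_]; last by rewrite andbF; case: ifP.
by rewrite cvertex_phi // {1}vE vertex_r.
Qed.

Lemma pushforward_lift F' y : CV y -> pf (lift_divisor F') y = F' y.
Proof.
rewrite /vertex /cr => /eqP phry; rewrite /pushforward (bigD1 (r (val y))) /=; last first.
  by rewrite vertex_r phry eqxx.
rewrite /lift_divisor phry eqxx big1 ?addr0 // => v /andP [/andP [_ /eqP <-]].
by case: eqP => // ->; rewrite eqxx.
Qed.

Lemma pushforwardB (D E : divisor X) y : pf (fun x => D x - E x) y = pf D y - pf E y.
Proof. exact: sumrB. Qed.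

Section Potential.
Variables (g : X -> G) (s : X -> int).
Hypothesis g_gp : forall v, V v -> in_gp M (g v).
Hypothesis slope_s : forall e, ~~ V e -> g (r e) - g (r (i e)) = l e *~ s e.

Lemma slope_i e : ~~ V e -> s (i e) = - s e.
Proof.
move=> Ve; case: (metrl e) => _ Mle [le0 _].
have le_neq0 : l e != 0 by apply: contra Ve => /eqP/le0.
apply/eqP; rewrite -addr_eq0 addrC; apply/eqP.
have [closedM sharp_M] := sharpM.
apply: (sharp_mulrz_eq0 closedM sharp_M Mle le_neq0).
have Vie : ~~ V (i e) by rewrite vertex_i.
by rewrite mulrzDr -slope_s // -[l e]l_i -slope_s // iK addrA subrK subrr.
Qed.

Definition potential (x : X) : G' := gp_ext M f (g (r x)).

Lemma potential_r x : potential (r x) = potential x.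
Proof. by rewrite /potential r_idem. Qed.

Lemma potential_slope e : ~~ V e -> potential e - potential (i e) = f (l e) *~ s e.
Proof.
have [closedM _] := sharpM; move=> Ve.
rewrite /potential -(gp_extB closedM homf); try exact/g_gp/vertex_r.
by rewrite slope_s // (gp_ext_mulrz closedM homf); case: (metrl e).
Qed.

Lemma potential_cgen x y : cg x y -> potential x = potential y.
Proof.
move=> /existsP [e /and4P [Ve /eqP fle0 xe ye]].
have pot_ie : potential (i e) = potential e.
  by apply/eqP; rewrite eq_sym -subr_eq0 potential_slope // fle0 mul0rz.
have pot_e z : z \in quad r i e -> potential z = potential e.
  by rewrite !inE => /or4P [] /eqP ->; rewrite ?potential_r.
by rewrite !pot_e.
Qed.

Lemma potential_connect x y : connect cg x y -> potential x = potential y.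
Proof.
move=> /connectP [p xp ->]; elim: p x xp => //= z p IHp x /andP [xz zp].
by rewrite (potential_cgen xz) IHp.
Qed.

Lemma potential_phi x : potential (val (ph x)) = potential x.
Proof. by rewrite (potential_connect (connect_phi x)). Qed.

Lemma pushforward_slopes (D : divisor X) y :
  (forall v, V v -> D v = \sum_(e | ~~ V e && (r e == v)) s e) ->
  pf D y = \sum_(e | ~~ V e && (ph (r e) == y)) s e.
Proof.
move=> lapD; rewrite /pushforward (eq_bigr (fun v => \sum_(e | ~~ V e && (r e == v)) s e));
  last by move=> v /andP [/lapD].
rewrite [RHS](partition_big r (fun v => V v && (ph v == y))) => [|e /andP [_ ->]];
  last by rewrite vertex_r.
apply: eq_bigr => v /andP [_ /eqP phv]; apply: eq_bigl => e.
by case: (r e =P v) => [->|]; rewrite ?phv ?eqxx ?andbT ?andbF.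
Qed.

(** The involution [i] pairs the contracted half-edges at a class and flips their slopes. *)
Lemma sum_contracted_slopes y :
  \sum_(e | ~~ V e && (ph (r e) == y) && (f (l e) == 0)) s e = 0.
Proof.
apply: (sum_odd_involution iK) => [e | e /andP [/andP [Ve _] _]]; last exact: slope_i.
rewrite vertex_i l_i; case Ve: (V e) => //=.
have [fle0|_] := eqVneq (f (l e)) 0; last by rewrite !andbF.
by rewrite (@phi_quad e (r (i e)) (r e)) ?Ve ?inE ?eqxx ?orbT.
Qed.

End Potential.

Lemma pushforward_principal (D : divisor X) :
  principal r i M l D -> principal CR CI N CL (pf D).
Proof.
move=> [g [[g_gp _] [s [slope_s lapD]]]].
pose g' (y : X') := potential g (val y).
have slope' y : ~~ CV y -> g' (CR y) - g' (CR (CI y)) = CL y *~ s (val y).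
  rewrite cvertexE negb_or => /andP [Ve _].
  rewrite /g' /cr /ci !(potential_phi g_gp slope_s) !potential_r.
  by rewrite (potential_phi g_gp slope_s) (potential_slope g_gp slope_s).
exists g'; split; first split.
- by move=> y _; apply: (gp_ext_in_gp homf); apply/g_gp/vertex_r.
- by move=> y /slope' slope_y; exists (s (val y)).
exists (fun y => s (val y)); split=> // y _.
rewrite (pushforward_slopes _ lapD) (bigID (fun e => f (l e) == 0)) /=.
by rewrite (sum_contracted_slopes slope_s) add0r sum_uncontracted.
Qed.

Lemma lin_equiv_pushforward (E D : divisor X) :
  lin_equiv r i M l E D -> lin_equiv CR CI N CL (pf E) (pf D).
Proof. by move/pushforward_principal; apply: principal_eq_vertex => y _; apply: pushforwardB. Qed.

Lemma rank_cond_pushforward (D : divisor X) a :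
  rank_cond r i M l D a -> rank_cond CR CI N CL (pf D) a.
Proof.
move=> rankD F' F'ge0 degF'.
have [E [Ege0 ED]] := rankD _ (lift_effective F'ge0) (etrans (deg_lift F') degF').
exists (pf E); split.
  by move=> y _; apply: sumr_ge0 => v /andP [+ _]; apply: Ege0.
move: (lin_equiv_pushforward ED); apply: principal_eq_vertex => y CVy.
by rewrite !pushforwardB pushforward_lift.
Qed.

End Contraction.

Theorem lemma4p4 (G G' : zmodType) (M : pred G) (N : pred G') (f : G -> G')
  (X : finType) (r i : X -> X) (l : X -> G) (D : X -> int) (a b : int) :
  sharp_int_monoid M -> sharp_int_monoid N -> monoid_hom M N f ->
  is_graph r i -> connected r i -> metrised r i M l ->
  is_rank r i M l D a ->
  is_rank (cr r i l f) (ci r i l f) N (cl r i l f) (pushforward r i l f D) b ->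
  a <= b.
Proof.
move=> sharpM _ homf graphX _ metrl [rankD _] [_ rank_max].
exact/rank_max/(rank_cond_pushforward sharpM homf graphX metrl).
Qed.
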